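(* Let $L\ge2$, $N\ge d_x$, and assume $X_\epsilon$ has rank $d_x$, $p\ge\mathrm{rank}\big(YX_\epsilon^T(X_\epsilon X_\epsilon^T)^{-1}\big)$, and the teacher interpolates the clean data: $\tilde W_{L:1}X=Y$. Then every global minimizer $(W_L^{base},\dots,W_1^{base})$ of $\mathcal L_{base}$ and every global minimizer $(W_L^{st},\dots,W_1^{st})$ of $\mathcal L_{st}$ satisfy $$W_{L:1}^{base}=W_{L:1}^{st}=YX_\epsilon^T(X_\epsilon X_\epsilon^T)^{-1}.$$
   Context: Clean inputs $x_i\in\mathbb R^{d_x}$, targets $y_i\in\mathbb R^{d_y}$, noise $\epsilon_i\in\mathbb R^{d_x}$, $i=1,\dots,N$; $X\in\mathbb R^{d_x\times N}$ has columns $x_i$, $X_\epsilon$ has columns $x_i+\epsilon_i$, $Y\in\mathbb R^{d_y\times N}$ has columns $y_i$. A deep linear network with $L$ layers is a tuple $(W_L,\dots,W_1)$ with $W_i\in\mathbb R^{d_i\times d_{i-1}}$, $d_0=d_x$, $d_L=d_y$; $W_{i:j}:=W_iW_{i-1}\cdots W_j$; $p:=\min_{0\le i\le L}d_i$. Base loss: $\mathcal L_{base}(W_L,\dots,W_1)=\|W_{L:1}X_\epsilon-Y\|_F^2$. Fix $i^*\in\{1,\dots,L\}$, $\lambda>0$ and teacher weights $(\tilde W_L,\dots,\tilde W_1)$ of the same shapes; the student–teacher loss is $\mathcal L_{st}(W_L,\dots,W_1)=\|W_{L:1}X_\epsilon-Y\|_F^2+\lambda\|W_{i^*:1}X_\epsilon-\tilde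 W_{i^*:1}X\|_F^2$. *)

From HB Require Import structures.
From mathcomp Require Import all_boot all_order all_algebra.
Set Implicit Arguments. Unset Strict Implicit. Unset Printing Implicit Defensive.
Import Order.TTheory GRing.Theory Num.Theory.
Local Open Scope ring_scope.

Definition frob2 (R : nzRingType) (m n : nat) (A : 'M[R]_(m, n)) : R :=
  \sum_(i < m) \sum_(j < n) (A i j) ^+ 2.

(* A deep linear network with layer widths d : nat -> nat is a family
   W k : 'M_(d k.+1, d k); W k is the paper's W_{k+1}. Only k < L matters. *)
Definition weights (R : nzRingType) (d : nat -> nat) :=
  forall k : nat, 'M[R]_(d k.+1, d k).

(* wprod W j = W_{j:1} = W_j ... W_1  (wprod W 0 = identity). *)
Fixpoint wprod (R : nzRingType) (d : nat -> nat) (W : weights R d) (j : nat)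
  : 'M[R]_(d j, d 0) :=
  match j with
  | 0 => 1%:M
  | j'.+1 => W j' *m wprod W j'
  end.

Definition min_width (d : nat -> nat) (L : nat) : nat :=
  \big[minn/d 0]_(i < L.+1) d i.

Definition loss_base (R : nzRingType) (d : nat -> nat) (L N : nat)
  (Xe : 'M[R]_(d 0, N)) (Y : 'M[R]_(d L, N)) (W : weights R d) : R :=
  frob2 (wprod W L *m Xe - Y).

Definition loss_st (R : nzRingType) (d : nat -> nat) (L N istar : nat)
  (lambda : R) (X Xe : 'M[R]_(d 0, N)) (Y : 'M[R]_(d L, N))
  (Wt : weights R d) (W : weights R d) : R :=
  frob2 (wprod W L *m Xe - Y)
  + lambda * frob2 (wprod W istar *m Xe - wprod Wt istar *m X).

From HB Require Import structures.
From mathcomp Require Import all_boot all_order all_algebra.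
Import Order.TTheory GRing.Theory Num.Theory.
Set Implicit Arguments. Unset Strict Implicit. Unset Printing Implicit Defensive.
Local Open Scope ring_scope.

(* When Xe has full row rank the Gram matrix Xe Xe^T is
   invertible and, for every target Z, the least-squares solution
   lsq Xe Z = Z Xe^T (Xe Xe^T)^-1 satisfies the Pythagorean identity
     |M Xe - Z|^2 = |(M - lsq Xe Z) Xe|^2 + |lsq Xe Z Xe - Z|^2,
   so lsq Xe Z is the UNIQUE minimiser of M |-> |M Xe - Z|^2.
   Both losses are sums of such least-squares terms, in W_{L:1} and in
   W_{i*:1}.  The teacher with its first layer right-multiplied by
   K = lsq Xe X is a network whose every prefix product W_{j:1} (j >= 1)
   equals lsq Xe (Wt_{j:1} X); since Wt_{L:1} X = Y it minimises each
   least-squares term separately.  Comparing any global minimiser with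
   this network forces its end-to-end product to be lsq Xe Y. *)

Section Frobenius.
Variable R : realDomainType.

Lemma frob2_tr m n (B : 'M[R]_(m, n)) : frob2 B = \tr (B *m B^T).
Proof.
rewrite /frob2 /mxtrace; apply: eq_bigr => i _; rewrite !mxE.
by apply: eq_bigr => j _; rewrite !mxE expr2.
Qed.

Lemma frob2_ge0 m n (B : 'M[R]_(m, n)) : 0 <= frob2 B.
Proof. by apply: sumr_ge0 => i _; apply: sumr_ge0 => j _; apply: sqr_ge0. Qed.

Lemma frob2_eq0 m n (B : 'M[R]_(m, n)) : frob2 B = 0 -> B = 0.
Proof.
move/eqP; rewrite psumr_eq0 => [/allP rows0|i _]; last first.
  by apply: sumr_ge0 => j _; apply: sqr_ge0.
apply/matrixP => i j; rewrite mxE.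
move: (rows0 i (mem_index_enum _)); rewrite /= psumr_eq0 => [/allP row0|k _].
  by move: (row0 j (mem_index_enum _)); rewrite /= sqrf_eq0 => /eqP.
exact: sqr_ge0.
Qed.

Lemma frob2D_orth m n (B C : 'M[R]_(m, n)) :
  B *m C^T = 0 -> frob2 (B + C) = frob2 B + frob2 C.
Proof.
move=> BC; rewrite !frob2_tr linearD mulmxDl !mulmxDr BC.
have -> : C *m B^T = 0 by rewrite -(trmxK (C *m B^T)) trmx_mul trmxK BC trmx0.
by rewrite addr0 add0r mxtraceD.
Qed.

End Frobenius.

Section LeastSquares.
Variables (R : realFieldType) (n N : nat) (Xe : 'M[R]_(n, N)).
Hypothesis freeXe : row_free Xe.

Definition lsq p (Z : 'M[R]_(p, N)) : 'M[R]_(p, n) :=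
  Z *m Xe^T *m invmx (Xe *m Xe^T).

Lemma gram_unit : Xe *m Xe^T \in unitmx.
Proof.
rewrite -row_free_unit; apply: inj_row_free => v vG0.
have /frob2_eq0/eqP : frob2 (v *m Xe) = 0.
  by rewrite frob2_tr trmx_mul mulmxA -(mulmxA v) vG0 mul0mx mxtrace0.
by rewrite mulmx_free_eq0 // => /eqP.
Qed.

Lemma frob2_mul_row_free_le0 p (D : 'M[R]_(p, n)) :
  frob2 (D *m Xe) <= 0 -> D = 0.
Proof.
move=> le0; have /frob2_eq0/eqP : frob2 (D *m Xe) = 0.
  by apply/eqP; rewrite eq_le le0 frob2_ge0.
by rewrite mulmx_free_eq0 // => /eqP.
Qed.

Lemma lsq_mull p q (A : 'M[R]_(p, q)) (Z : 'M[R]_(q, N)) :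
  lsq (A *m Z) = A *m lsq Z.
Proof. by rewrite /lsq !mulmxA. Qed.

Lemma lsq_residual_orth p (Z : 'M[R]_(p, N)) : (lsq Z *m Xe - Z) *m Xe^T = 0.
Proof. by rewrite mulmxBl /lsq -!mulmxA mulVmx ?gram_unit // mulmx1 subrr. Qed.

Lemma lsq_pythagoras p (M : 'M[R]_(p, n)) (Z : 'M[R]_(p, N)) :
  frob2 (M *m Xe - Z) = frob2 ((M - lsq Z) *m Xe) + frob2 (lsq Z *m Xe - Z).
Proof.
rewrite -frob2D_orth; first by rewrite mulmxBl addrA subrK.
by rewrite -mulmxA -[Xe *m _]trmxK trmx_mul trmxK lsq_residual_orth trmx0 mulmx0.
Qed.

Lemma lsq_min p (M : 'M[R]_(p, n)) (Z : 'M[R]_(p, N)) :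
  frob2 (lsq Z *m Xe - Z) <= frob2 (M *m Xe - Z).
Proof. by rewrite [leRHS]lsq_pythagoras lerDr frob2_ge0. Qed.

Lemma lsq_unique p (M : 'M[R]_(p, n)) (Z : 'M[R]_(p, N)) :
  frob2 (M *m Xe - Z) <= frob2 (lsq Z *m Xe - Z) -> M = lsq Z.
Proof.
rewrite lsq_pythagoras gerDr => le0; apply/eqP; rewrite -subr_eq0.
by apply/eqP; apply: frob2_mul_row_free_le0 le0.
Qed.

End LeastSquares.

Definition precompose_first (R : nzRingType) (d : nat -> nat) (Wt : weights R d)
  (K : 'M[R]_(d 0, d 0)) : weights R d :=
  fun k => match k return 'M[R]_(d k.+1, d k) with
           | 0 => Wt 0%N *m K
           | k'.+1 => Wt k'.+1
           end.

Lemma wprod_precompose_first (R : nzRingType) (d : nat -> nat) (Wt : weights R d)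
  (K : 'M[R]_(d 0, d 0)) j :
  wprod (precompose_first Wt K) j.+1 = wprod Wt j.+1 *m K.
Proof.
elim: j => [|j IH] /=; first by rewrite !mulmx1.
by rewrite -/(wprod _ j.+1) IH mulmxA.
Qed.

Lemma wprod_teacher_lsq (R : realFieldType) (d : nat -> nat) (N j : nat)
  (X Xe : 'M[R]_(d 0, N)) (Wt : weights R d) : (0 < j)%N ->
  wprod (precompose_first Wt (lsq Xe X)) j = lsq Xe (wprod Wt j *m X).
Proof. by case: j => // j _; rewrite wprod_precompose_first lsq_mull. Qed.

Theorem theorem2 (R : realFieldType) (d : nat -> nat) (L N istar : nat)
  (lambda : R) (X E : 'M[R]_(d 0, N)) (Y : 'M[R]_(d L, N))
  (Wt : weights R d) :
  (2 <= L)%N ->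
  (d 0 <= N)%N ->
  (1 <= istar <= L)%N ->
  0 < lambda ->
  \rank (X + E)%R = d 0 ->
  (\rank (Y *m (X + E)^T *m invmx ((X + E) *m (X + E)^T)) <= min_width d L)%N ->
  wprod Wt L *m X = Y ->
  (forall W : weights R d,
     (forall W' : weights R d,
        loss_base (X + E) Y W <= loss_base (X + E) Y W') ->
     wprod W L = Y *m (X + E)^T *m invmx ((X + E) *m (X + E)^T)) /\
  (forall W : weights R d,
     (forall W' : weights R d,
        loss_st istar lambda X (X + E) Y Wt W
        <= loss_st istar lambda X (X + E) Y Wt W') ->
     wprod W L = Y *m (X + E)^T *m invmx ((X + E) *m (X + E)^T)).
Proof.
move=> L2 _ /andP[istar1 _] lambda0 rkXe _ teacher.
set Xe := X + E; have freeXe : row_free Xe by rewrite /row_free rkXe.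
set W0 := precompose_first Wt (lsq Xe X).
have W0L : wprod W0 L = lsq Xe Y.
  by rewrite wprod_teacher_lsq ?teacher // (leq_trans _ L2).
have W0i : wprod W0 istar = lsq Xe (wprod Wt istar *m X).
  exact: wprod_teacher_lsq.
split=> W minW; apply: (lsq_unique freeXe); rewrite -W0L.
  exact: minW.
(* W0 also minimises the teacher term, so the output terms compare. *)
have := minW W0; rewrite /loss_st W0i => st_le.
have fit_le := lsq_min freeXe (wprod W istar) (wprod Wt istar *m X).
rewrite -(lerD2r (lambda * frob2 (wprod W istar *m Xe - wprod Wt istar *m X))).
by rewrite (le_trans st_le) // lerD2l ler_wpM2l // ltW.
Qed.
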